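(* There exist constants $c_1,c_2>0$ such that for all $n\ge1$, $c_1(3/4)^n\le 1-\mathcal{C}^*(n)\le c_2(3/4)^n$; that is, $1-\mathcal{C}^*(n)=\Theta\big((3/4)^n\big)$.
   Context: The concentratable entanglement of an $n$-qubit pure state is $\mathcal{C}(\ket{\psi})=1-\frac{1}{2^{n}}\sum_{\alpha\subseteq [n]}\mathrm{Tr}[\rho_\alpha^2]$ ($\rho_\alpha$ the reduced state on $\alpha$, $\mathrm{Tr}[\rho_\emptyset^2]=1$), and $\mathcal{C}^*(n)=\max_{\ket{\psi}}\mathcal{C}(\ket{\psi})$ over $n$-qubit pure states. *)

From HB Require Import structures.
From mathcomp Require Import all_boot all_order all_algebra.
From mathcomp Require Import complex.
From mathcomp Require Import classical_sets reals.
Set Implicit Arguments. Unset Strict Implicit. Unset Printing Implicit Defensive.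
Import Order.TTheory GRing.Theory Num.Theory.
Local Open Scope ring_scope.
Local Open Scope classical_set_scope.

Section QState.
Variable R : realType.
Variable n : nat.

(* computational basis labels of n qubits *)
Definition bits := {ffun 'I_n -> bool}.

(* an n-qubit (unnormalized) pure state vector in C^(2^n) *)
Definition qstate := {ffun bits -> R[i]}.

Definition normalized (psi : qstate) : Prop :=
  \sum_(x : bits) psi x * conjc (psi x) = 1.

(* basis labels of the subsystem alpha: labels that are 0 outside alpha *)
Definition on_sub (alpha : {set 'I_n}) (x : bits) : bool :=
  [forall i, (i \notin alpha) ==> ~~ x i].

Definition merge (alpha : {set 'I_n}) (x y : bits) : bits :=
  [ffun i => if i \in alpha then x i else y i].

(* matrix entries <x|rho_alpha|x'> of the reduced state on alpha
   (partial trace over the complement of alpha) *)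
Definition rho (alpha : {set 'I_n}) (psi : qstate) (x x' : bits) : R[i] :=
  \sum_(y : bits | on_sub (~: alpha) y)
     psi (merge alpha x y) * conjc (psi (merge alpha x' y)).

Definition purity (alpha : {set 'I_n}) (psi : qstate) : R[i] :=
  \sum_(x : bits | on_sub alpha x) \sum_(x' : bits | on_sub alpha x')
     rho alpha psi x x' * rho alpha psi x' x.

(* concentratable entanglement (the purities are real; we take real parts) *)
Definition conc_ent (psi : qstate) : R :=
  1 - (2 ^+ n)^-1 * \sum_(alpha : {set 'I_n}) complex.Re (purity alpha psi).

(* C*(n) = max (= sup) over normalized n-qubit pure states *)
Definition Cstar : R :=
  sup [set c | exists psi : qstate, normalized psi /\ c = conc_ent psi].

End QState.

(* Lower bound on 1 - C*: the reduced state rho_alpha has unit trace and 2^|alpha|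
   diagonal entries, so by Cauchy-Schwarz Tr[rho_alpha^2] >= 2^-|alpha|; summing over
   alpha gives sum_alpha Tr[rho_alpha^2] >= (3/2)^n, i.e. C(psi) <= 1 - (3/4)^n.
   Upper bound: average over all real states with amplitudes +-2^(-n/2).  A product of
   four independent uniform signs averages to 0 unless the four labels pair up, so the
   average of Tr[rho_alpha^2] is at most 2^-|alpha| + 2^-(n-|alpha|).  Summing over
   alpha, some sign state has sum_alpha Tr[rho_alpha^2] <= 2 (3/2)^n, i.e.
   C(psi) >= 1 - 2 (3/4)^n. *)

From Pilot Require Import Defs.
From HB Require Import structures.
From mathcomp Require Import all_boot all_order all_algebra.
From mathcomp Require Import complex.
From mathcomp Require Import classical_sets reals.
From mathcomp Require Import ring lra.
Set Implicit Arguments. Unset Strict Implicit. Unset Printing Implicit Defensive.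
Import Order.TTheory GRing.Theory Num.Theory.
Local Open Scope ring_scope.

(* Otherwise [merge] would denote the sorting function path.merge. *)
Local Notation merge := Defs.merge.

Lemma sum_subsets_pow (R : comPzSemiRingType) n (a b : R) :
  \sum_(A : {set 'I_n}) a ^+ #|A| * b ^+ #|~: A| = (a + b) ^+ n.
Proof.
rewrite -[in RHS](card_ord n) -prodr_const.
rewrite [RHS](eq_bigr (fun=> \sum_(c : bool) if c then a else b)) => [|i _]; last first.
  by rewrite big_bool.
rewrite bigA_distr_bigA (reindex (fun A : {set 'I_n} => [ffun i => i \in A])) /=.
  apply: eq_bigr => A _; rewrite (bigID (mem A)) -!prodr_const /=.
  by congr (_ * _); apply: eq_big => i; rewrite ?inE ?ffunE //; case: (i \in A).
exists (fun f : {ffun 'I_n -> bool} => [set i | f i]) => [A _ | f _].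
  by apply/setP => i; rewrite inE ffunE.
by apply/ffunP => i; rewrite ffunE inE.
Qed.

Section Powers.
Variables (R : numFieldType) (n : nat).

Lemma sum_inv_exp2_card : \sum_(A : {set 'I_n}) (2 ^+ #|A|)^-1 = (3 / 2) ^+ n :> R.
Proof.
have -> : 3 / 2 = 2^-1 + 1 :> R by field.
rewrite -sum_subsets_pow; apply: eq_bigr => A _.
by rewrite expr1n mulr1 exprVn.
Qed.

Lemma sum_inv_exp2_cardC : \sum_(A : {set 'I_n}) (2 ^+ #|~: A|)^-1 = (3 / 2) ^+ n :> R.
Proof.
have -> : 3 / 2 = 1 + 2^-1 :> R by field.
rewrite -sum_subsets_pow; apply: eq_bigr => A _.
by rewrite expr1n mul1r exprVn.
Qed.

Lemma expr_three_quarters : (3 / 4) ^+ n = (2 ^+ n)^-1 * (3 / 2) ^+ n :> R.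
Proof. by rewrite -exprVn -exprMn; congr (_ ^+ _); field. Qed.

End Powers.

Lemma sqr_sum_le_card_sum_sqr (R : realDomainType) (I : finType) (P : pred I)
    (F : I -> R) :
  (\sum_(i | P i) F i) ^+ 2 <= #|P|%:R * \sum_(i | P i) F i ^+ 2.
Proof.
have : 0 <= \sum_(i | P i) \sum_(j | P j) (F i - F j) ^+ 2.
  by do 2 apply: sumr_ge0 => ? _; exact: sqr_ge0.
suff -> : \sum_(i | P i) \sum_(j | P j) (F i - F j) ^+ 2 =
    2 * (#|P|%:R * \sum_(i | P i) F i ^+ 2 - (\sum_(i | P i) F i) ^+ 2).
  by rewrite pmulr_rge0 // subr_ge0.
have sqrB i j : (F i - F j) ^+ 2 = F i ^+ 2 + F j ^+ 2 - 2 * (F i * F j).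
  by ring.
under eq_bigr do rewrite (eq_bigr _ (fun j _ => sqrB _ j)) sumrB big_split /=.
under eq_bigr do rewrite sumr_const -mulr_sumr -mulr_sumr.
rewrite sumrB big_split /= sumr_const -mulr_sumr -mulr_suml -expr2.
by rewrite !sumrMnl; ring.
Qed.

Lemma exists_le_mean (R : realFieldType) (I : finType) (i0 : I) (F : I -> R) (c : R) :
  \sum_i F i <= #|I|%:R * c -> exists i, F i <= c.
Proof.
move=> F_le.
have [i _ Fi_min] := @arg_minP _ _ _ i0 xpredT F isT.
exists i; have I_gt0 : 0 < #|I|%:R :> R by rewrite ltr0n; apply/card_gt0P; exists i0.
rewrite -(ler_pM2l I_gt0); apply: le_trans F_le.
by rewrite mulr_natl -sumr_const; apply: ler_sum => j _; apply: Fi_min.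
Qed.

Lemma sum_delta_const (R : pzSemiRingType) (I : finType) (P : pred I) (a b : R) :
  \sum_(i | P i) \sum_(j | P j) ((i == j)%:R * a + b) =
  #|P|%:R * a + #|P|%:R ^+ 2 * b.
Proof.
have delta i : P i -> \sum_(j | P j) (i == j)%:R * a = a.
  move=> Pi; rewrite (bigD1 i) //= eqxx mul1r big1 ?addr0 // => j /andP[_ ji].
  by rewrite eq_sym (negbTE ji) mul0r.
rewrite (eq_bigr (fun=> a + #|P|%:R * b)) => [|i Pi]; last first.
  by rewrite big_split delta ?sumr_const ?mulr_natl.
by rewrite big_split !sumr_const -[a *+ _]mulr_natl -[(_ * b) *+ _]mulr_natl mulrA.
Qed.

Section SignSums.
Variables (R : numDomainType) (T : finType).

Lemma sum_sign4_eq0 (a b c d : T) : a != b -> a != c -> a != d ->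
  \sum_(f : {ffun T -> bool}) (-1) ^+ f a * (-1) ^+ f b * (-1) ^+ f c * (-1) ^+ f d
  = 0 :> R.
Proof.
(* Toggling f at a is an involution on sign patterns that negates every term. *)
move=> ab ac ad; set S := LHS.
pose flip (f : {ffun T -> bool}) := [ffun t => (t == a) (+) f t].
have flipK : involutive flip.
  by move=> f; apply/ffunP => t; rewrite !ffunE addbA addbb.
suff /eqP : S = - S by rewrite -subr_eq0 opprK -mulr2n mulrn_eq0 => /eqP.
rewrite {1}/S (reindex_inj (inv_inj flipK)) -sumrN; apply: eq_bigr => f _.
rewrite !ffunE eqxx ![_ == a]eq_sym (negbTE ab) (negbTE ac) (negbTE ad) signr_addb.
by rewrite expr1 !mulN1r !mulNr.
Qed.

Lemma sign4_le1 (b1 b2 b3 b4 : bool) :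
  (-1) ^+ b1 * (-1) ^+ b2 * (-1) ^+ b3 * (-1) ^+ b4 <= 1 :> R.
Proof.
rewrite -!exprD -signr_odd; case: odd; rewrite ?expr1 ?expr0 //.
exact: le_trans (lerN10 R) ler01.
Qed.

End SignSums.

Section Subsystems.
Variable n : nat.
Implicit Types (al : {set 'I_n}) (x y z : bits n).

Definition restrict al z : bits n := merge al z [ffun=> false].

Lemma restrict_mergel al x y : restrict al (merge al x y) = restrict al x.
Proof. by apply/ffunP => i; rewrite !ffunE; case: (i \in al). Qed.

Lemma restrict_merger al x y : restrict (~: al) (merge al x y) = restrict (~: al) y.
Proof. by apply/ffunP => i; rewrite !ffunE inE; case: (i \in al). Qed.

Lemma restrict_id al x : (restrict al x == x) = on_sub al x.
Proof.
apply/eqP/forallP => [<- i | x_al]; first by rewrite !ffunE; case: (i \in al).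
apply/ffunP => i; rewrite !ffunE; case: ifP => // i_al.
by have /implyP/(_ (negbT i_al))/negbTE := x_al i.
Qed.

Lemma merge_restrict al z : merge al (restrict al z) (restrict (~: al) z) = z.
Proof. by apply/ffunP => i; rewrite !ffunE inE; case: (i \in al). Qed.

Lemma merge_inj al x y x' y' :
  on_sub al x -> on_sub al x' -> on_sub (~: al) y -> on_sub (~: al) y' ->
  merge al x y = merge al x' y' -> x = x' /\ y = y'.
Proof.
rewrite -!restrict_id => /eqP x_al /eqP x'_al /eqP y_al /eqP y'_al.
move=> /[dup] /(congr1 (restrict al)) + /(congr1 (restrict (~: al))).
by rewrite !restrict_mergel !restrict_merger x_al x'_al y_al y'_al => -> ->.
Qed.

Lemma big_merge (V : Type) (idx : V) (op : Monoid.com_law idx) al (F : bits n -> V) :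
  \big[op/idx]_z F z =
  \big[op/idx]_(x | on_sub al x) \big[op/idx]_(y | on_sub (~: al) y) F (merge al x y).
Proof.
rewrite pair_big_dep (reindex_onto (fun p => merge al p.1 p.2)
  (fun z => (restrict al z, restrict (~: al) z))) /=; last first.
  by move=> z _; rewrite merge_restrict.
apply: eq_bigl => -[x y] /=.
by rewrite xpair_eqE restrict_mergel restrict_merger !restrict_id.
Qed.

Lemma on_sub_pffun_on al x : on_sub al x = (x \in pffun_on false al predT).
Proof.
apply/forallP/pffun_onP => [x_al | [/supportP x_al _] i].
  by split=> //; apply/supportP => i /(implyP (x_al i))/negbTE.
by apply/implyP => /x_al ->.
Qed.

Lemma card_on_sub al : #|on_sub al| = (2 ^ #|al|)%N.
Proof.
by rewrite (eq_card (on_sub_pffun_on al)) card_pffun_on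
  (@eq_card _ _ {: bool}) ?card_bool.
Qed.

End Subsystems.

Local Open Scope complex_scope.
Local Notation Re := complex.Re.
Local Notation Im := complex.Im.

Lemma Re_mul_conjc (R : rcfType) (a : R[i]) : Re (a * a^*) = Re a ^+ 2 + Im a ^+ 2.
Proof. by rewrite -sqr_normc -add_Re2_Im2. Qed.

Section PurityLowerBound.
Variables (R : realType) (n : nat).
Implicit Types (al : {set 'I_n}) (psi : qstate R n) (x y : bits n).

Lemma rho_adj al psi x x' : rho al psi x' x = (rho al psi x x')^*.
Proof.
by rewrite /rho rmorph_sum; apply: eq_bigr => y _; rewrite rmorphM /= conjcK mulrC.
Qed.

Lemma trace_rho al psi :
  \sum_(x | on_sub al x) rho al psi x x = \sum_z psi z * (psi z)^*.
Proof. by rewrite (big_merge _ al). Qed.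

Lemma sum_sqr_diag_le_purity al psi :
  \sum_(x | on_sub al x) Re (rho al psi x x) ^+ 2 <= Re (purity al psi).
Proof.
have Re_rho2 x x' : Re (rho al psi x x' * rho al psi x' x) =
    Re (rho al psi x x') ^+ 2 + Im (rho al psi x x') ^+ 2.
  by rewrite (rho_adj al psi x x') Re_mul_conjc.
rewrite /purity raddf_sum; apply: ler_sum => x x_al.
rewrite [leRHS]raddf_sum (bigD1 x) //= Re_rho2 -addrA lerDl addr_ge0 ?sqr_ge0 //.
by apply: sumr_ge0 => x' _; rewrite Re_rho2 addr_ge0 ?sqr_ge0.
Qed.

Lemma purity_ge_inv_dim al psi :
  normalized psi -> (2 ^+ #|al|)^-1 <= Re (purity al psi).
Proof.
move=> psi1; apply: le_trans (sum_sqr_diag_le_purity al psi).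
have tr1 : \sum_(x | on_sub al x) Re (rho al psi x x) = 1.
  by rewrite -raddf_sum trace_rho psi1.
have := sqr_sum_le_card_sum_sqr (on_sub al) (fun x => Re (rho al psi x x)).
rewrite tr1 expr1n card_on_sub natrX => cauchy_schwarz.
by rewrite -[leLHS]mulr1 ler_pdivrMl ?exprn_gt0.
Qed.

End PurityLowerBound.

Lemma conc_ent_le (R : realType) n (psi : qstate R n) :
  normalized psi -> conc_ent psi <= 1 - (3 / 4) ^+ n.
Proof.
move=> psi1; rewrite /conc_ent lerD2l lerN2 expr_three_quarters.
rewrite ler_wpM2l ?invr_ge0 ?exprn_ge0 // -sum_inv_exp2_card.
by apply: ler_sum => al _; apply: purity_ge_inv_dim.
Qed.

Section RealStates.
Variables (R : realType) (n : nat).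
Implicit Types (al : {set 'I_n}) (u : bits n -> R) (x y : bits n).

Definition real_state u : qstate R n := [ffun z => (u z)%:C].

Lemma normalized_real_state u : \sum_z u z ^+ 2 = 1 -> normalized (real_state u).
Proof.
move=> u1; rewrite /normalized -[1]/(1%:C) -u1 rmorph_sum.
by apply: eq_bigr => z _; rewrite ffunE conjc_real -rmorphM.
Qed.

Lemma rho_real_state al u x x' : rho al (real_state u) x x' =
  (\sum_(y | on_sub (~: al) y) u (merge al x y) * u (merge al x' y))%:C.
Proof.
by rewrite rmorph_sum; apply: eq_bigr => y _; rewrite !ffunE conjc_real rmorphM.
Qed.

Lemma Re_purity_real_state al u : Re (purity al (real_state u)) =
  \sum_(x | on_sub al x) \sum_(x' | on_sub al x')
    (\sum_(y | on_sub (~: al) y) u (merge al x y) * u (merge al x' y)) ^+ 2.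
Proof.
rewrite /purity raddf_sum; apply: eq_bigr => x _.
rewrite raddf_sum; apply: eq_bigr => x' _.
rewrite !rho_real_state -rmorphM expr2 /=; congr (_ * _).
by apply: eq_bigr => y _; rewrite mulrC.
Qed.

End RealStates.

Section SignStates.
Variables (R : realType) (n : nat).
Implicit Types (al : {set 'I_n}) (f : {ffun bits n -> bool}) (x y : bits n).

Definition sign_state f : qstate R n :=
  real_state (fun z => Num.sqrt (2 ^+ n)^-1 * (-1) ^+ f z).

Let sqr_amplitude : Num.sqrt (2 ^+ n)^-1 ^+ 2 = (2 ^+ n)^-1 :> R.
Proof. by rewrite sqr_sqrtr // invr_ge0 exprn_ge0. Qed.

Lemma normalized_sign_state f : normalized (sign_state f).
Proof.
apply: normalized_real_state.
under eq_bigr do rewrite exprMn sqrr_sign mulr1 sqr_amplitude.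
rewrite sumr_const card_ffun card_bool card_ord -(mulr_natr (2 ^- n)) natrX mulVf //.
by rewrite expf_neq0 // pnatr_eq0.
Qed.

Lemma Re_purity_sign_state al f : Re (purity al (sign_state f)) = (2 ^+ n)^-2 *
  \sum_(x | on_sub al x) \sum_(x' | on_sub al x')
    (\sum_(y | on_sub (~: al) y) (-1) ^+ f (merge al x y) * (-1) ^+ f (merge al x' y)) ^+ 2.
Proof.
rewrite Re_purity_real_state mulr_sumr; apply: eq_bigr => x _.
rewrite mulr_sumr; apply: eq_bigr => x' _.
under eq_bigr do rewrite mulrACA -expr2 sqr_amplitude.
by rewrite -mulr_sumr exprMn exprVn.
Qed.

Local Notation K := (#|{ffun bits n -> bool}|%:R : R).

Lemma sum_sign_corr_le al x x' y y' :
  on_sub al x -> on_sub al x' -> on_sub (~: al) y -> on_sub (~: al) y' ->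
  \sum_(f : {ffun bits n -> bool})
    (-1) ^+ f (merge al x y) * (-1) ^+ f (merge al x' y) *
    ((-1) ^+ f (merge al x y') * (-1) ^+ f (merge al x' y'))
  <= (y == y')%:R * K + (x == x')%:R * K.
Proof.
move=> x_al x'_al y_al y'_al.
have [x_or_y | ] := boolP ((x == x') || (y == y')).
  apply: (@le_trans _ _ K).
    by rewrite -sumr_const; apply: ler_sum => f _; rewrite mulrA sign4_le1.
  by case/orP: x_or_y => /eqP->; rewrite eqxx mul1r ?lerDr ?lerDl mulr_ge0.
rewrite negb_or => /andP[xx' yy'].
rewrite (eq_bigr _ (fun f _ => mulrA _ _ _)) sum_sign4_eq0 ?addr_ge0 ?mulr_ge0 //.
- by apply: contra xx' => /eqP/(merge_inj x_al x'_al y_al y_al)[->].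
- by apply: contra yy' => /eqP/(merge_inj x_al x_al y_al y'_al)[_ ->].
- by apply: contra xx' => /eqP/(merge_inj x_al x'_al y_al y'_al)[->].
Qed.

Lemma sum_sign_corr_sqr_le al x x' : on_sub al x -> on_sub al x' ->
  \sum_(f : {ffun bits n -> bool})
    (\sum_(y | on_sub (~: al) y) (-1) ^+ f (merge al x y) * (-1) ^+ f (merge al x' y)) ^+ 2
  <= (x == x')%:R * (2 ^+ #|~: al| ^+ 2 * K) + 2 ^+ #|~: al| * K.
Proof.
move=> x_al x'_al.
under eq_bigr do rewrite expr2 big_distrlr /=.
rewrite exchange_big; under eq_bigr do rewrite exchange_big /=.
apply: (@le_trans _ _ (\sum_(y | on_sub (~: al) y) \sum_(y' | on_sub (~: al) y')
  ((y == y')%:R * K + (x == x')%:R * K))).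
  by do 2 apply: ler_sum => ? ?; exact: sum_sign_corr_le.
by rewrite sum_delta_const card_on_sub natrX mulrCA addrC.
Qed.

Lemma sum_sign_states_purity_le al :
  \sum_(f : {ffun bits n -> bool}) Re (purity al (sign_state f)) <=
  K * ((2 ^+ #|al|)^-1 + (2 ^+ #|~: al|)^-1).
Proof.
under eq_bigr do rewrite Re_purity_sign_state.
rewrite -mulr_sumr exchange_big; under eq_bigr do rewrite exchange_big /=.
apply: (@le_trans _ _ ((2 ^+ n)^-2 * \sum_(x | on_sub al x) \sum_(x' | on_sub al x')
    ((x == x')%:R * (2 ^+ #|~: al| ^+ 2 * K) + 2 ^+ #|~: al| * K))).
  rewrite ler_wpM2l ?invr_ge0 ?exprn_ge0 //.
  by do 2 apply: ler_sum => ? ?; exact: sum_sign_corr_sqr_le.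
have -> : 2 ^+ n = 2 ^+ #|al| * 2 ^+ #|~: al| :> R by rewrite -exprD cardsC card_ord.
rewrite sum_delta_const card_on_sub natrX le_eqVlt; apply/predU1P; left.
have pow2_neq0 k : 2 ^+ k != 0 :> R by rewrite expf_neq0 ?pnatr_eq0.
by field; rewrite !pow2_neq0.
Qed.

End SignStates.

Section Bounds.
Variables (R : realType) (n : nat).

Lemma exists_sign_state_sum_purity_le : exists f : {ffun bits n -> bool},
  \sum_(al : {set 'I_n}) Re (purity al (sign_state R f)) <= 2 * (3 / 2) ^+ n.
Proof.
apply: (exists_le_mean [ffun=> false]); rewrite exchange_big /=.
apply: le_trans (ler_sum _ (fun al _ => sum_sign_states_purity_le R al)) _.
rewrite -mulr_sumr big_split /= sum_inv_exp2_card sum_inv_exp2_cardC.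
by apply: ler_wpM2l => //; lra.
Qed.

Let S := [set c | exists psi : qstate R n, normalized psi /\ c = conc_ent psi]%classic.

Lemma Cstar_le : Cstar R n <= 1 - (3 / 4) ^+ n.
Proof.
apply: ge_sup => [|_ [psi [psi1 ->]]]; last exact: conc_ent_le.
pose psi0 := sign_state R (n := n) [ffun=> false].
by exists (conc_ent psi0), psi0; split=> //; apply: normalized_sign_state.
Qed.

Lemma Cstar_ge : 1 - 2 * (3 / 4) ^+ n <= Cstar R n.
Proof.
have [f sum_purity_le] := exists_sign_state_sum_purity_le.
have has_ub : has_ubound S.
  by exists (1 - (3 / 4) ^+ n) => _ [psi [psi1 ->]]; exact: conc_ent_le.
apply: (@le_trans _ _ (conc_ent (sign_state R f))).
  rewrite /conc_ent lerD2l lerN2 expr_three_quarters mulrCA.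
  by rewrite ler_wpM2l ?invr_ge0 ?exprn_ge0.
apply: ub_le_sup has_ub _ _.
by exists (sign_state R f); split=> //; apply: normalized_sign_state.
Qed.

End Bounds.

Theorem mainTheorem12 (R : realType) :
  exists c1 c2 : R, 0 < c1 /\ 0 < c2 /\
    forall n : nat, (1 <= n)%N ->
      c1 * (3 / 4) ^+ n <= 1 - Cstar R n /\ 1 - Cstar R n <= c2 * (3 / 4) ^+ n.
Proof.
exists 1, 2; do 2 split=> //; move=> n _.
by split; [rewrite mul1r lerBrDl -lerBrDr Cstar_le | rewrite lerBlDl -lerBlDr Cstar_ge].
Qed.
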